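(* For every $n\ge1$: if $\pi\in\mathfrak{S}_n(312)$ then $\mathsf{adi}\,\pi=(2\text{-}13)\pi$; and if $\pi\in\mathfrak{S}_n(231)$ then $\mathsf{adi}^*\,\pi=(13\text{-}2)\pi$.
   Context: $\mathfrak{S}_n(\tau)$: permutations of $[n]$ avoiding the classical pattern $\tau$. $(2\text{-}13)\pi=\#\{(i,j):j<i<n,\ \pi(i)<\pi(j)<\pi(i+1)\}$; $(13\text{-}2)\pi=\#\{(i,j):i+1<j\le n,\ \pi(i)<\pi(j)<\pi(i+1)\}$. Admissible inversions: set $\pi(n+1)=0$; an inversion pair $(\pi(i),\pi(j))$ ($1\le i<j\le n$, $\pi(i)>\pi(j)$) is admissible if $\pi(j)<\pi(j+1)$ or there is $l$ with $i<l<j$ and $\pi(l)<\pi(j)$; $\mathsf{adi}\,\pi$ counts them. Star admissible: set $\pi(0)=n+1$; an inversion pair $(\pi(i),\pi(j))$ with $i<j$ is star admissible if $\pi(i-1)<\pi(i)$ or there is $l$ with $i<l<j$ and $\pi(l)>\pi(i)$; $\mathsf{adi}^*\,\pi$ counts them. *)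

From mathcomp Require Import all_boot all_fingroup.
Set Implicit Arguments. Unset Strict Implicit. Unset Printing Implicit Defensive.

(* Permutations of [n] are modelled as s : 'S_n (permutations of 'I_n = {0..n-1}).
   We use 1-based positions and values: pv s i = s(i-1) + 1 for 1 <= i <= n. *)
Definition pv n (s : 'S_n) (i : nat) : nat :=
  match insub i.-1 with Some k => (s k).+1 | None => 0 end.

(* value with the sentinel pi(n+1) = 0 (positions outside 1..n give 0) *)
Definition pv0 n (s : 'S_n) (i : nat) : nat :=
  if (1 <= i <= n) then pv s i else 0.

(* value with the sentinel pi(0) = n+1 *)
Definition pvS n (s : 'S_n) (i : nat) : nat :=
  if i == 0 then n.+1 else pv s i.

Definition avoids312 n (s : 'S_n) : bool :=
  [forall i : 'I_n, forall j : 'I_n, forall k : 'I_n,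
     ~~ [&& i < j, j < k & s j < s k < s i]].
Definition avoids231 n (s : 'S_n) : bool :=
  [forall i : 'I_n, forall j : 'I_n, forall k : 'I_n,
     ~~ [&& i < j, j < k & s k < s i < s j]].

Definition pat2_13 n (s : 'S_n) : nat :=
  \sum_(1 <= i < n) \sum_(1 <= j < i)
     ((pv s i < pv s j) && (pv s j < pv s i.+1)).

Definition pat13_2 n (s : 'S_n) : nat :=
  \sum_(1 <= i < n.+1) \sum_(i.+2 <= j < n.+1)
     ((pv s i < pv s j) && (pv s j < pv s i.+1)).

Definition adi n (s : 'S_n) : nat :=
  \sum_(1 <= i < n.+1) \sum_(i.+1 <= j < n.+1)
     [&& pv s j < pv s i &
        (pv0 s j < pv0 s j.+1) || [exists l : 'I_n.+1, (i < l < j) && (pv s l < pv s j)]].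

Definition adi_star n (s : 'S_n) : nat :=
  \sum_(1 <= i < n.+1) \sum_(i.+1 <= j < n.+1)
     [&& pv s j < pv s i &
        (pvS s i.-1 < pvS s i) || [exists l : 'I_n.+1, (i < l < j) && (pv s i < pv s l)]].

From mathcomp Require Import all_boot all_fingroup zify.
Set Implicit Arguments. Unset Strict Implicit. Unset Printing Implicit Defensive.

(* For a 312-avoider no inversion (pi(i), pi(j)) can have a smaller entry
   pi(l) < pi(j) strictly between, so it is admissible exactly when
   pi(j) < pi(j+1); avoidance of 312 on i < j < j+1 then forces
   pi(j) < pi(i) < pi(j+1), an occurrence of 2-13 anchored at the ascent j.
   Dually, a 231-avoider has no larger entry between the two values of an
   inversion, and the star condition pi(i-1) < pi(i) becomes
   pi(i-1) < pi(j) < pi(i), an occurrence of 13-2 anchored at the ascent i-1. *)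

Lemma sum_nat_triangle (F : nat -> nat -> nat) N :
  \sum_(1 <= i < N) \sum_(i.+1 <= j < N) F i j =
  \sum_(1 <= j < N) \sum_(1 <= i < j) F i j.
Proof.
elim: N => [|[|N] IH]; try by rewrite !big_geq.
rewrite [LHS]big_nat_recr //= [RHS]big_nat_recr //= [X in _ + X = _]big_geq //.
rewrite addn0 -IH -big_split /=.
by apply: eq_big_nat => i /andP[_ iN]; rewrite big_nat_recr.
Qed.

Section PermutationValues.

Variables (n : nat) (s : 'S_n).

Lemma pvE i (i_lt : i.-1 < n) : pv s i = (s (Ordinal i_lt)).+1.
Proof.
rewrite /pv; case: insubP => [k _ k_i|]; last by rewrite i_lt.
by congr (s _).+1; apply: val_inj.
Qed.

Lemma pv_out i : n < i -> pv s i = 0.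
Proof. by move=> n_lt_i; rewrite /pv; case: insubP => [k k_lt _|//]; lia. Qed.

Lemma pv_le i : pv s i <= n.
Proof. by rewrite /pv; case: insubP => [k _ _|//]; apply: ltn_ord. Qed.

Lemma pv0S i : pv0 s i.+1 = pv s i.+1.
Proof. by rewrite /pv0; case: ifP => // /negbT; rewrite /= -ltnNge => /pv_out ->. Qed.

Lemma pv0E i : 1 <= i <= n -> pv0 s i = pv s i.
Proof. by rewrite /pv0 => ->. Qed.

Lemma pv_inj a b : 1 <= a <= n -> 1 <= b <= n -> pv s a = pv s b -> a = b.
Proof.
move=> a_in b_in.
have a_lt : a.-1 < n by lia.
have b_lt : b.-1 < n by lia.
rewrite (pvE a_lt) (pvE b_lt) => /succn_inj/val_inj/perm_inj/(congr1 val) /=.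
lia.
Qed.

Lemma pv_pattern (P : nat -> nat -> nat -> bool) :
  (forall i j k : 'I_n, i < j < k -> ~~ P (s i).+1 (s j).+1 (s k).+1) ->
  forall a b c, 1 <= a -> a < b -> b < c -> c <= n ->
  ~~ P (pv s a) (pv s b) (pv s c).
Proof.
move=> avoid a b c a1 ab bc cn.
have a_lt : a.-1 < n by lia.
have b_lt : b.-1 < n by lia.
have c_lt : c.-1 < n by lia.
rewrite (pvE a_lt) (pvE b_lt) (pvE c_lt); apply: avoid => /=; apply/andP; lia.
Qed.

Lemma avoids312_pv : avoids312 s ->
  forall a b c, 1 <= a -> a < b -> b < c -> c <= n ->
  ~~ (pv s b < pv s c < pv s a).
Proof.
move=> avoid; apply: (@pv_pattern (fun x y z => y < z < x)) => i j k ijk.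
by move/forallP/(_ i)/forallP/(_ j)/forallP/(_ k): avoid; case/andP: ijk => -> ->; rewrite !ltnS.
Qed.

Lemma avoids231_pv : avoids231 s ->
  forall a b c, 1 <= a -> a < b -> b < c -> c <= n ->
  ~~ (pv s c < pv s a < pv s b).
Proof.
move=> avoid; apply: (@pv_pattern (fun x y z => z < x < y)) => i j k ijk.
by move/forallP/(_ i)/forallP/(_ j)/forallP/(_ k): avoid; case/andP: ijk => -> ->; rewrite !ltnS.
Qed.

End PermutationValues.

Section Avoiding312.

Variables (n : nat) (s : 'S_n).
Hypothesis avoid : avoids312 s.

Lemma adi_term_avoids312 i j : 1 <= i < j -> j <= n ->
  [&& pv s j < pv s i &
     (pv0 s j < pv0 s j.+1) || [exists l : 'I_n.+1, (i < l < j) && (pv s l < pv s j)]]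
  = (pv s j < pv s i < pv s j.+1).
Proof.
move=> /andP[i1 ij] jn; case: ltnP => //= ji.
have -> : [exists l : 'I_n.+1, (i < l < j) && (pv s l < pv s j)] = false.
  apply/existsPn => l; apply/negP => /andP[/andP[il lj] lj_lt].
  by move: (avoids312_pv avoid i1 il lj jn); rewrite lj_lt ji.
rewrite orbF pv0S pv0E; last by apply/andP; lia.
case: (ltnP j n) => [jn'|nj]; last by rewrite (@pv_out _ _ j.+1) ?ltn0 //; lia.
have no312 := avoids312_pv avoid i1 ij (ltnSn j) jn'.
have neq : pv s i != pv s j.+1 by apply/eqP => /pv_inj; lia.
move: ji no312 neq; case: ltnP; case: ltnP; lia.
Qed.

Lemma adi_avoids312 : adi s = pat2_13 s.
Proof.
have -> : adi s =
    \sum_(1 <= i < n.+1) \sum_(i.+1 <= j < n.+1) (pv s j < pv s i < pv s j.+1).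
  apply: eq_big_nat => i /andP[i1 _]; apply: eq_big_nat => j /andP[ij jn].
  by rewrite adi_term_avoids312 ?i1 //; lia.
rewrite sum_nat_triangle /pat2_13; case: (leqP 1 n) => [n1|]; last first.
  by move=> n0; rewrite !big_geq //; lia.
rewrite big_nat_recr //= [X in _ + X]big1_seq ?addn0 // => i _.
by rewrite (@pv_out _ _ n.+1) // ltn0 andbF.
Qed.

End Avoiding312.

Section Avoiding231.

Variables (n : nat) (s : 'S_n).
Hypothesis avoid : avoids231 s.

Lemma adi_star_term_avoids231 i j : 1 <= i < j -> j <= n ->
  [&& pv s j < pv s i &
     (pvS s i.-1 < pvS s i) || [exists l : 'I_n.+1, (i < l < j) && (pv s i < pv s l)]]
  = (1 < i) && (pv s i.-1 < pv s j < pv s i).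
Proof.
move=> /andP[i1 ij] jn; case: ltnP => /= ji; last by rewrite !andbF.
have -> : [exists l : 'I_n.+1, (i < l < j) && (pv s i < pv s l)] = false.
  apply/existsPn => l; apply/negP => /andP[/andP[il lj] il_lt].
  by move: (avoids231_pv avoid i1 il lj jn); rewrite il_lt ji.
rewrite orbF /pvS; case: (ltnP 1 i) => [i_gt1|i_le1] /=; last first.
  have -> : i = 1 by lia.
  by rewrite /= ltnNge ltnW ?ltnS ?pv_le.
have -> : (i.-1 == 0) = false by apply/eqP; lia.
have -> : (i == 0) = false by apply/eqP; lia.
have no231 := avoids231_pv avoid (_ : 1 <= i.-1) (_ : i.-1 < i) ij jn.
have neq : pv s i.-1 != pv s j by apply/eqP => /pv_inj; lia.
move: ji (no231 ltac:(lia) ltac:(lia)) neq; case: ltnP; case: ltnP; lia.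
Qed.

Lemma adi_star_avoids231 : adi_star s = pat13_2 s.
Proof.
have -> : adi_star s = \sum_(1 <= i < n.+1) \sum_(i.+1 <= j < n.+1)
                         ((1 < i) && (pv s i.-1 < pv s j < pv s i)).
  apply: eq_big_nat => i /andP[i1 _]; apply: eq_big_nat => j /andP[ij jn].
  by rewrite adi_star_term_avoids231 ?i1 //; lia.
rewrite /pat13_2; case: (leqP 1 n) => [n1|]; last first.
  by move=> n0; rewrite !big_geq //; lia.
rewrite big_ltn // big1_seq ?add0n => [|j _]; last by rewrite ltnn.
rewrite big_add1 /= [RHS]big_nat_recr //= [X in _ = _ + X]big_geq // addn0.
by apply: eq_big_nat => i /andP[i1 _]; apply: eq_big_nat => j _; rewrite ltnS i1.
Qed.

End Avoiding231.

Theorem lemma3p4 (n : nat) (s : 'S_n) : 1 <= n ->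
  (avoids312 s -> adi s = pat2_13 s) /\ (avoids231 s -> adi_star s = pat13_2 s).
Proof.
by move=> _; split; [apply: adi_avoids312 | apply: adi_star_avoids231].
Qed.
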